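(* Suppose that $M=1$ (so $N=p$), that $\theta=\omega^2$, and that $H$ is a space of level $N$ cuspidal-at-zero modular symbols having a $T_2$-operator. If $T_2$ acts on $H^{\omega^2}$ as multiplication by $1+2\omega^{-2}(2)$, then $H^{\omega^2}=C^{\omega^2}$.
   Context: $p$ is an odd prime, $N=p$, $\Delta=(\mathbb{Z}/N\mathbb{Z})^\times/\langle-1\rangle$, $\langle a\rangle\in\mathbb{Z}_p[\Delta]$ the group element of $a$. A space of level $N$ cuspidal-at-zero modular symbols is a $\mathbb{Z}_p[\Delta]$-module $H$ spanned by symbols $[u:v]$ for nonzero $u,v\in\mathbb{Z}/N\mathbb{Z}$ generating the unit ideal, satisfying $[u:v]=[-u:-v]=-[-v:u]$, $[u:v]=[u:u+v]+[u+v:v]$ whenever $u\neq-v$, and $\langle a\rangle[u:v]=[au:av]$. A $T_2$-operator (for $N$ odd) is a $\mathbb{Z}_p[\Delta]$-linear endomorphism $T_2$ of $H$ with $\langle2\rangle T_2[u:v]=[2u:v]+[2u:u+v]+[u+v:2v]+[u:2v]$ for all $u,v$ with $(u,v)=(1)$ and $u$, $v$, $u+v$ nonzero. For integers $c,d>1$ prime to $6N$, ${}_{c,d}[u:v]=c^2d^2[u:v]-c^2[u:dv]-d^2[cu:v]+[cu:dv]$, and $C$ is the $\mathbb{Z}_p$-span of all such symbols with $u,v\neq0$. $\omega$ is the Teichmüller character of $(\mathbb{Z}/p\mathbb{Z})^\times$, $\mathcal{O}=\mathbb{Z}_p[\mu_{\varphi(N)}]$, $e_{\omega^2}=\frac1{\varphi(N)}\sum_a\omega^{-2}(a)\langle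 a\rangle$, and $D^{\omega^2}=e_{\omega^2}(D\otimes_{\mathbb{Z}_p}\mathcal{O})$. *)

From HB Require Import structures.
From mathcomp Require Import all_boot all_order all_algebra.
From mathcomp Require Import boolp classical_sets.
Set Implicit Arguments. Unset Strict Implicit. Unset Printing Implicit Defensive.
Import GRing.Theory Num.Theory.
Local Open Scope ring_scope.

Lemma modz_dvdm_ (m d k : int) : modz (modz m (d * k)) d = modz m d.
Proof.
have E := @divz_eq m (d * k).
by rewrite [in RHS]E (mulrC d k) mulrA modzMDl.
Qed.

Definition pbase (p : nat) : nat := (p.-2).+2.
Definition pmod (p n : nat) : int := ((pbase p)%:Z) ^+ n.

Record padic (p : nat) := Padic {
  pval : nat -> int;
  pvalP : forall n, pval n = modz (pval n.+1) (pmod p n) }.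

HB.instance Definition _ p := gen_eqMixin (padic p).
HB.instance Definition _ p := gen_choiceMixin (padic p).

Section PadicRing.
Variable p : nat.
Local Notation q := (pmod p).

Lemma padic_eq (x y : padic p) : pval x =1 pval y -> x = y.
Proof.
case: x y => [f fP] [g gP] /= fg.
have efg : f = g by apply: funext.
subst g; congr Padic; exact: Prop_irrelevance.
Qed.

Lemma pmodS n : q n.+1 = q n * (pbase p)%:Z.
Proof. by rewrite /pmod exprSr. Qed.

Lemma pval_mod (x : padic p) n : modz (pval x n) (q n) = pval x n.
Proof. by rewrite [in RHS]pvalP [in LHS]pvalP modz_mod. Qed.

Definition lift_op (F : int -> int -> int)
  (HF : forall a b d, modz (F (modz a d) (modz b d)) d = modz (F a b) d)
  (x y : padic p) : padic p.
Proof.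
refine (@Padic p (fun n => modz (F (pval x n) (pval y n)) (q n)) _).
by move=> n; rewrite pmodS modz_dvdm_ -[RHS]HF -!pvalP.
Defined.

Lemma HFadd a b d : modz (modz a d + modz b d) d = modz (a + b) d.
Proof. by rewrite modzDml modzDmr. Qed.
Lemma HFmul a b d : modz (modz a d * modz b d) d = modz (a * b) d.
Proof. by rewrite modzMml modzMmr. Qed.
Lemma HFopp a (b : int) d : modz (- modz a d) d = modz (- a) d.
Proof. by rewrite -mulN1r modzMmr mulN1r. Qed.

Definition padd := @lift_op (fun a b => a + b) HFadd.
Definition pmul := @lift_op (fun a b => a * b) HFmul.
Definition popp (x : padic p) := @lift_op (fun a b => - a) (fun a b d => HFopp a b d) x x.
Definition pzero : padic p := @Padic p (fun _ => 0) (fun n => esym (mod0z _)).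
Definition pone : padic p.
Proof.
refine (@Padic p (fun n => modz 1 (q n)) _).
by move=> n; rewrite pmodS modz_dvdm_.
Defined.

Lemma paddA : associative padd.
Proof. by move=> x y z; apply: padic_eq => n /=; rewrite modzDml modzDmr addrA. Qed.
Lemma paddC : commutative padd.
Proof. by move=> x y; apply: padic_eq => n /=; rewrite addrC. Qed.
Lemma padd0 : left_id pzero padd.
Proof. by move=> x; apply: padic_eq => n /=; rewrite add0r pval_mod. Qed.
Lemma paddN : left_inverse pzero popp padd.
Proof. by move=> x; apply: padic_eq => n /=; rewrite modzDml addNr mod0z. Qed.

HB.instance Definition _ := GRing.isZmodule.Build (padic p) paddA paddC padd0 paddN.

Lemma pmulA : associative pmul.
Proof. by move=> x y z; apply: padic_eq => n /=; rewrite modzMml modzMmr mulrA. Qed.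
Lemma pmulC : commutative pmul.
Proof. by move=> x y; apply: padic_eq => n /=; rewrite mulrC. Qed.
Lemma pmul1 : left_id pone pmul.
Proof. by move=> x; apply: padic_eq => n /=; rewrite modzMml mul1r pval_mod. Qed.
Lemma pmulDl : left_distributive pmul padd.
Proof.
by move=> x y z; apply: padic_eq => n /=; rewrite modzMml modzDml modzDmr mulrDl.
Qed.
Lemma pone_neq0 : pone != pzero.
Proof.
apply/eqP => /(congr1 (fun x => pval x 1)) /=.
rewrite /pmod expr1 modz_small //.
Qed.

HB.instance Definition _ := GRing.Zmodule_isComNzRing.Build (padic p) pmulA pmulC pmul1 pmulDl pone_neq0.
End PadicRing.


(* The ring Z_p of p-adic integers is [padic p] (for p prime, pbase p = p): *)
(* compatible sequences (x_n) with x_n in [0, p^n) and x_{n+1} = x_n mod p^n. *)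
(* Z/NZ with N = p prime is 'F_p.                                            *)

(* 1/phi(N) = 1/(p-1) in Z_p: the element w with w * (p-1) = 1. *)
Definition padic_inv (p : nat) (z : padic p) : padic p :=
  xget 0 [set w | w * z = 1].

Definition teich (p : nat) (a : 'F_p) : padic p :=
  xget 0 [set z : padic p | z ^+ p.-1 = 1 /\ pval z 1 = (nat_of_ord a)%:Z].

(* The character omega^{-2} : a |-> omega(a)^{-2} = omega(a^{-1})^2. *)
Definition omega_m2 (p : nat) (a : 'F_p) : padic p := teich (a^-1) ^+ 2.

(* Space of level N = p cuspidal-at-zero modular symbols: a Z_p-module H   *)
(* with a Z_p-linear action act of Delta = (Z/pZ)^x/<-1> (act a = <a>) and   *)
(* symbols sym u v = [u:v] (u, v nonzero in Z/pZ, which for N = p prime is  *)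
(* the same as (u,v) = (1)) spanning H and satisfying the relations.        *)
Definition cusp_modsym (p : nat) (H : lmodType (padic p))
  (act : 'F_p -> H -> H) (sym : 'F_p -> 'F_p -> H) : Prop :=
      (forall a : 'F_p, a != 0 -> forall (c : padic p) (x y : H),
          act a (c *: x + y) = c *: act a x + act a y) /\
      (forall x, act 1 x = x) /\
      (forall a b : 'F_p, a != 0 -> b != 0 -> forall x,
          act (a * b) x = act a (act b x)) /\
      (forall x, act (-1) x = x) /\
      (forall x : H, exists c : {ffun 'F_p * 'F_p -> padic p},
          x = \sum_(uv : 'F_p * 'F_p | (uv.1 != 0) && (uv.2 != 0))
                c uv *: sym uv.1 uv.2) /\
      (forall u v : 'F_p, u != 0 -> v != 0 ->
          sym u v = sym (- u) (- v) /\ sym u v = - sym (- v) u) /\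
      (forall u v : 'F_p, u != 0 -> v != 0 -> u != - v ->
          sym u v = sym u (u + v) + sym (u + v) v) /\
      (forall a u v : 'F_p, a != 0 -> u != 0 -> v != 0 ->
          act a (sym u v) = sym (a * u) (a * v)).

Definition T2_operator (p : nat) (H : lmodType (padic p))
  (act : 'F_p -> H -> H) (sym : 'F_p -> 'F_p -> H) (T2 : H -> H) : Prop :=
  [/\ (forall (c : padic p) (x y : H), T2 (c *: x + y) = c *: T2 x + T2 y),
      (forall a : 'F_p, a != 0 -> forall x, T2 (act a x) = act a (T2 x)) &
      (forall u v : 'F_p, u != 0 -> v != 0 -> u + v != 0 ->
          act 2 (T2 (sym u v)) =
            sym (2 * u) v + sym (2 * u) (u + v) + sym (u + v) (2 * v)
            + sym u (2 * v))].

Definition cd_sym (p : nat) (H : lmodType (padic p))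
  (sym : 'F_p -> 'F_p -> H) (c d : nat) (u v : 'F_p) : H :=
  (c ^ 2 * d ^ 2)%:R *: sym u v - (c ^ 2)%:R *: sym u (d%:R * v)
  - (d ^ 2)%:R *: sym (c%:R * u) v + sym (c%:R * u) (d%:R * v).

Definition in_C (p : nat) (H : lmodType (padic p))
  (sym : 'F_p -> 'F_p -> H) (x : H) : Prop :=
  exists (n : nat) (k : 'I_n -> padic p) (cs ds : 'I_n -> nat)
         (us vs : 'I_n -> 'F_p),
    (forall i, [/\ (1 < cs i)%N, (1 < ds i)%N, coprime (cs i) (6 * p),
                   coprime (ds i) (6 * p) & (us i != 0) && (vs i != 0)]) /\
    x = \sum_(i < n) k i *: cd_sym sym (cs i) (ds i) (us i) (vs i).

Definition e_om2 (p : nat) (H : lmodType (padic p))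
  (act : 'F_p -> H -> H) (x : H) : H :=
  padic_inv (p.-1)%:R *: \sum_(a : 'F_p | a != 0) omega_m2 a *: act a x.

From HB Require Import structures.
From mathcomp Require Import all_boot all_order all_algebra all_field.
From mathcomp Require Import boolp classical_sets.
From mathcomp Require Import zify ring.
Import GRing.Theory.
Local Open Scope ring_scope.
Set Implicit Arguments. Unset Strict Implicit. Unset Printing Implicit Defensive.

(* Write f_t = e_{omega^2}[1:t].  Since [u:v] = <u>[1:v/u] and e_{omega^2} <u> =
   omega^2(u) e_{omega^2}, the f_t span H^{omega^2}.  Modulo M = e(C) + p e(H),
   the symbols _{c,d}[1:t], the relation [u:v] = -[-v:u] and the T_2-eigenvalue
   relation at [1:2] become F_p-linear relations among the f_t, and these force
   every f_t into M; hence e(H) = e(C) + p e(H).  For c = 1 (mod p) one has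
   _{c,c}[u:v] = (c^2 - 1)^2 [u:v] with p exactly dividing c^2 - 1, so p^2 H lies
   in C, and substituting the congruence into itself gives e(H) = e(C). *)

Section PropSubmodule.
Variables (R : pzRingType) (V : lmodType R).

Definition prop_submod_closed (S : V -> Prop) :=
  S 0 /\ forall (c : R) (x y : V), S x -> S y -> S (c *: x + y).

Variable S : V -> Prop.
Hypothesis S_closed : prop_submod_closed S.

Lemma prop_submod0 : S 0. Proof. exact: S_closed.1. Qed.

Lemma prop_submodD x y : S x -> S y -> S (x + y).
Proof. by move=> Sx Sy; rewrite -[x]scale1r; apply: S_closed.2. Qed.

Lemma prop_submodZ (c : R) x : S x -> S (c *: x).
Proof.
by move=> Sx; rewrite -[_ *: _]addr0; apply: S_closed.2 => //; apply: prop_submod0.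
Qed.

Lemma prop_submod_sum (I : Type) (r : seq I) (P : pred I) (F : I -> V) :
  (forall i, P i -> S (F i)) -> S (\sum_(i <- r | P i) F i).
Proof.
by move=> SF; apply: big_ind => //; [apply: prop_submod0 | apply: prop_submodD].
Qed.

End PropSubmodule.

Lemma linear_image_lift_mod_sq (R : pzRingType) (V : lmodType R) (f : {linear V -> V})
    (S : V -> Prop) (r : R) :
  prop_submod_closed S -> (forall x, S (r ^+ 2 *: x)) ->
  (forall x, exists c y, S c /\ f x = f c + r *: f y) ->
  forall x, exists c, S c /\ f x = f c.
Proof.
move=> S_closed Sr2 f_modr x.
have [c0 [y0 [Sc0 ->]]] := f_modr x; have [c1 [y1 [Sc1 ->]]] := f_modr y0.
exists (c0 + r *: c1 + r ^+ 2 *: y1); split.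
  by do 2?apply: prop_submodD => //; apply: prop_submodZ.
by rewrite !linearD !linearZ /= scalerDr scalerA -expr2 addrA.
Qed.

Section PrimeLevel.
Variable p : nat.
Hypothesis p_prime : prime p.
Local Notation P := (padic p).

Lemma pmodE n : pmod p n = p%:Z ^+ n.
Proof. by rewrite /pmod /pbase; have := prime_gt1 p_prime; case: p => [|[|]]. Qed.

Lemma pval_modm (x : P) m n : (m <= n)%N -> pval x m = (pval x n %% pmod p m)%Z.
Proof.
move=> /subnK <-; elim: (n - m)%N => [|k IH]; first by rewrite add0n pval_mod.
by rewrite IH addSn (pvalP x (k + m)) !pmodE exprD mulrC modz_dvdm_.
Qed.

Lemma pval_natr (m : nat) n : pval (m%:R : P) n = (m%:Z %% pmod p n)%Z.
Proof.
elim: m => [|m IH]; first by rewrite mod0z.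
by rewrite -natr1 /= IH modzDml modzDmr -[in RHS]addn1 PoszD.
Qed.

Lemma pvalX (x : P) k n : pval (x ^+ k) n = (pval x n ^+ k %% pmod p n)%Z.
Proof.
elim: k => [|k IH]; first by [].
by rewrite !exprS /= IH modzMmr.
Qed.

Lemma Fp_intr_eq0 (a : int) : ((a%:~R : 'F_p) == 0) = (p%:Z %| a)%Z.
Proof.
case: a => n; first by rewrite dvdzE -(val_eqE (n%:R : 'F_p) 0) /= (val_Fp_nat p_prime).
rewrite dvdzE NegzE abszN mulrNz oppr_eq0.
by rewrite -(val_eqE (n.+1%:R : 'F_p) 0) /= (val_Fp_nat p_prime).
Qed.

Lemma Fp_intr_eq (a b : int) : ((a%:~R : 'F_p) == b%:~R) = (a == b %[mod p])%Z.
Proof. by rewrite -subr_eq0 -intrB Fp_intr_eq0 eqz_mod_dvd. Qed.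

Lemma Fp_intr_mod (a : int) : ((a %% p)%Z%:~R : 'F_p) = a%:~R.
Proof. by apply/eqP; rewrite Fp_intr_eq modz_mod. Qed.

Definition red (x : P) : 'F_p := (pval x 1)%:~R.

Lemma redE (x : P) n : (0 < n)%N -> red x = (pval x n)%:~R.
Proof. by move=> n_gt0; rewrite /red (pval_modm x n_gt0) pmodE expr1 Fp_intr_mod. Qed.

Lemma red_is_zmod_morphism : zmod_morphism red.
Proof.
move=> x y; rewrite /red /= pmodE expr1 Fp_intr_mod intrD.
by rewrite Fp_intr_mod intrN.
Qed.

Lemma red_is_monoid_morphism : monoid_morphism red.
Proof.
by split=> [|x y]; rewrite /red /= pmodE expr1 Fp_intr_mod ?intrM.
Qed.

HB.instance Definition _ := GRing.isZmodMorphism.Build P 'F_p red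
  red_is_zmod_morphism.
HB.instance Definition _ := GRing.isMonoidMorphism.Build P 'F_p red
  red_is_monoid_morphism.

Lemma red_eq0_dvdp (z : P) : red z = 0 -> exists z' : P, z = p%:R * z'.
Proof.
move=> /eqP; rewrite /red Fp_intr_eq0 => /dvdz_mod0P.
rewrite -[p%:Z]expr1 -pmodE pval_mod => z1.
have p_dvd n : (p%:Z %| pval z n.+1)%Z.
  by apply/dvdz_mod0P; rewrite -[p%:Z]expr1 -pmodE -pval_modm.
pose b n := (pval z n.+1 %/ p)%Z.
have zE n : pval z n.+1 = b n * p by rewrite divzK.
have p_neq0 : p%:Z != 0 by rewrite eqz_nat -lt0n prime_gt0.
have bP n : b n = (b n.+1 %% pmod p n)%Z.
  apply: (mulIf p_neq0).
  by rewrite -zE mulz_modl ?ltz_nat ?prime_gt0 // -zE !pmodE -exprSr -pmodE -pvalP.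
exists (Padic bP); apply: padic_eq => n /=.
by rewrite pval_natr modzMml mulrC -zE -pvalP.
Qed.

Lemma egcdz_modinv (a q : int) :
  coprimez a q -> ((egcdz a q).1 * a = 1 %[mod q])%Z.
Proof.
by case: egcdzP => u v /= Duv _ /eqP co; rewrite -(modzMDl v) addrC Duv co.
Qed.

Lemma modinv_uniq (q a a' u u' : int) :
  (u * a = 1 %[mod q])%Z -> (u' * a' = 1 %[mod q])%Z -> (a = a' %[mod q])%Z ->
  (u = u' %[mod q])%Z.
Proof.
move=> ua u'a' aa'.
rewrite -[u]mulr1 -modzMmr -u'a' modzMmr mulrA -modzMmr -aa' modzMmr.
by rewrite mulrAC -modzMml ua modzMml mul1r.
Qed.

Lemma red_neq0_invertible (z : P) : red z != 0 -> exists w : P, w * z = 1.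
Proof.
move=> z_unit.
have co n : coprimez (pval z n) (pmod p n).
  case: n => [|n]; first by rewrite pmodE expr0 /coprimez gcdz1.
  rewrite pmodE; apply: coprimezXr.
  by rewrite coprimez_sym coprimezE prime_coprime // -dvdzE -Fp_intr_eq0 -redE.
pose u n := ((egcdz (pval z n) (pmod p n)).1 %% pmod p n)%Z.
have uz n : (u n * pval z n = 1 %[mod pmod p n])%Z.
  by rewrite modzMml egcdz_modinv.
have uP n : u n = (u n.+1 %% pmod p n)%Z.
  transitivity (u n %% pmod p n)%Z; first by rewrite modz_mod.
  apply: (modinv_uniq (uz n)); last by rewrite [in LHS]pvalP modz_mod.
  by rewrite -(modz_dvdm_ (_ * _) _ (pbase p)%:Z) -(modz_dvdm_ 1 _ (pbase p)%:Z) -pmodS uz.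
by exists (Padic uP); apply: padic_eq => n /=; apply: uz.
Qed.

Lemma red_natr_Fp (a : 'F_p) : red (val a)%:R = a.
Proof. by rewrite rmorph_nat natr_Zp. Qed.

Lemma Fp_fermat (a : 'F_p) : a ^+ p = a.
Proof. by have := expf_card a; rewrite (card_Fp p_prime). Qed.

Lemma Fp_fermat_unit (a : 'F_p) : a != 0 -> a ^+ p.-1 = 1.
Proof.
move=> a0; apply: (mulfI a0); rewrite mulr1 -exprS prednK ?prime_gt0 //.
exact: Fp_fermat.
Qed.

Lemma Fp_natr_neq0 n : ~~ (p %| n)%N -> (n%:R : 'F_p) != 0.
Proof. by apply: contra => /eqP/(congr1 val); rewrite /= val_Fp_nat // => /eqP. Qed.

Lemma Fp_val_lt (a : 'F_p) : (val a < p)%N.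
Proof. by have := ltn_ord a; rewrite [X in (_ < X)%N -> _](Fp_cast p_prime). Qed.

Lemma expz_pexpn_congr (x y : int) k :
  (x = y %[mod p])%Z -> (x ^+ (p ^ k) = y ^+ (p ^ k) %[mod p%:Z ^+ k.+1])%Z.
Proof.
move=> /eqP xy; apply/eqP; elim: k => [|k IH]; first by rewrite !expn0 !expr1.
rewrite expnSr !exprM; move: IH.
set X := x ^+ (p ^ k); set Y := y ^+ (p ^ k) => IH; clearbody X Y.
rewrite eqz_mod_dvd subrXX exprSr; apply: dvdz_mul; first by rewrite -eqz_mod_dvd.
have XY : (X%:~R : 'F_p) = Y%:~R.
  apply/eqP; rewrite Fp_intr_eq; move/eqP: IH; rewrite exprS => IH.
  by rewrite -(modz_dvdm_ X p (p%:Z ^+ k)) IH modz_dvdm_.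
rewrite -Fp_intr_eq0 rmorph_sum /= (eq_bigr (fun _ => (Y%:~R : 'F_p) ^+ p.-1)).
  by rewrite sumr_const card_ord -mulr_natr (pchar_Fp_0 p_prime) mulr0.
move=> i _; rewrite rmorphM !rmorphXn /= XY -exprD.
by rewrite subnK // -ltnS prednK ?prime_gt0.
Qed.

Lemma teich_exists (a : 'F_p) : a != 0 ->
  exists z : P, z ^+ p.-1 = 1 /\ pval z 1 = (val a)%:Z.
Proof.
move=> a0; set A := (val a)%:Z.
have Afermat : (A ^+ p = A %[mod p])%Z.
  by apply/eqP; rewrite -Fp_intr_eq rmorphXn /= -pmulrn natr_Zp Fp_fermat eqxx.
have Afermat1 : (A ^+ p.-1 = 1 %[mod p])%Z.
  by apply/eqP; rewrite -Fp_intr_eq rmorphXn /= -pmulrn natr_Zp Fp_fermat_unit //.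
pose t n := (A ^+ (p ^ n.-1) %% pmod p n)%Z.
have tP n : t n = (t n.+1 %% pmod p n)%Z.
  rewrite /t pmodS modz_dvdm_; case: n => [|k]; first by rewrite pmodE expr0 !modz1.
  by rewrite pmodE /= -(expz_pexpn_congr k Afermat) -exprM -expnS.
exists (Padic tP); split.
  apply: padic_eq => n; rewrite pvalX /= modzXm.
  case: n => [|k]; first by rewrite pmodE expr0 !modz1.
  by rewrite /= -exprM mulnC exprM pmodE (expz_pexpn_congr k Afermat1) expr1n.
rewrite /t /= expn0 expr1 pmodE expr1 modz_small //.
by rewrite /A ltz_nat Fp_val_lt andbT.
Qed.

Lemma teich_spec (a : 'F_p) : a != 0 ->
  teich a ^+ p.-1 = 1 /\ pval (teich a) 1 = (val a)%:Z.
Proof. by move=> a0; apply: (xgetPex 0 (teich_exists a0)). Qed.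

Lemma red_teich (a : 'F_p) : a != 0 -> red (teich a) = a.
Proof. by move=> a0; rewrite /red (teich_spec a0).2 -pmulrn natr_Zp. Qed.

Lemma red_root1_neq0 (z : P) : z ^+ p.-1 = 1 -> red z != 0.
Proof.
move=> /(congr1 red); rewrite rmorphXn rmorph1 /=.
by apply: contra_eqN => /eqP->; rewrite expr0n -subn1 subn_eq0 leqNgt prime_gt1.
Qed.

Lemma root1_red_inj (z w : P) :
  z ^+ p.-1 = 1 -> w ^+ p.-1 = 1 -> red z = red w -> z = w.
Proof.
move=> z1 w1 rzw.
pose S := \sum_(i < p.-1) z ^+ (p.-2 - i) * w ^+ i.
have zwS : (z - w) * S = 0 by rewrite -subrXX z1 w1 subrr.
have redS : red S = (p.-1)%:R * red w ^+ p.-2.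
  rewrite rmorph_sum /= (eq_bigr (fun _ => red w ^+ p.-2)).
    by rewrite sumr_const card_ord mulr_natl.
  move=> i _; rewrite rmorphM !rmorphXn /= rzw -exprD subnK //.
  by have := ltn_ord i; lia.
have [|S' S'S] := @red_neq0_invertible S.
  rewrite redS mulf_neq0 ?expf_neq0 ?red_root1_neq0 // Fp_natr_neq0 //.
  by rewrite gtnNdvd //; have := prime_gt1 p_prime; lia.
by apply/eqP; rewrite -subr_eq0 -[z - w]mulr1 -S'S mulrCA zwS mulr0.
Qed.

Lemma teichM (a b : 'F_p) : a != 0 -> b != 0 -> teich (a * b) = teich a * teich b.
Proof.
move=> a0 b0; have ab0 : a * b != 0 by rewrite mulf_neq0.
apply: root1_red_inj; first exact: (teich_spec ab0).1.
  by rewrite exprMn (teich_spec a0).1 (teich_spec b0).1 mulr1.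
by rewrite rmorphM /= !red_teich.
Qed.

Lemma teich1 : teich (1 : 'F_p) = 1.
Proof.
apply: root1_red_inj; first exact: (teich_spec (oner_neq0 _)).1.
  by rewrite expr1n.
by rewrite rmorph1 red_teich ?oner_neq0.
Qed.

Hypothesis p_odd : odd p.

Lemma coprime6_shift (A : nat) :
  ~~ (p %| A)%N -> exists j, [/\ (0 < j)%N, ~~ (p %| j)%N & coprime (A + p * j) 6].
Proof.
have co6 n : coprime n 6 = odd n && ~~ (3 %| n)%N.
  by rewrite -[6%N]/(2 * 3)%N coprimeMr coprimen2 coprime_sym prime_coprime.
have small_ndvd j : (0 < j < p)%N -> ~~ (p %| j)%N by case/andP=> j0 jp; rewrite gtnNdvd.
have p_gt1 := prime_gt1 p_prime.
have [p3 | p_neq3] := eqVneq p 3.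
  move=> nA; exists (if odd A then 2 else 1)%N; rewrite co6.
  by move: nA; rewrite p3; case: ifP => oA; split; lia.
have p_ndvd3 : ~~ (3 %| p)%N by rewrite dvdn_prime2 // eq_sym.
move=> _; have [oA | eA] := boolP (odd A).
  exists (if 3 %| A + p * 2 then 4 else 2)%N; rewrite co6.
  by case: ifP => ?; split; try apply: small_ndvd; lia.
exists (if 3 %| A + p * 1 then 3 else 1)%N; rewrite co6.
by case: ifP => ?; split; try apply: small_ndvd; lia.
Qed.

Lemma Fp_unit_natr_lift (a : 'F_p) : a != 0 ->
  exists C : nat, [/\ (1 < C)%N, coprime C (6 * p) & (C%:R : 'F_p) = a].
Proof.
move=> a0; have a_ndvd : ~~ (p %| val a)%N by rewrite gtnNdvd ?lt0n ?Fp_val_lt.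
have [j [j0 _ co6]] := coprime6_shift a_ndvd.
exists (val a + p * j)%N; split.
- by have := prime_gt1 p_prime; nia.
- rewrite coprimeMr co6 coprime_sym prime_coprime // dvdn_addl ?dvdn_mulr //.
- by rewrite natrD natrM pchar_Fp_0 // mul0r addr0 natr_Zp.
Qed.

Lemma Fp2_neq0 : (2 : 'F_p) != 0.
Proof.
apply: Fp_natr_neq0; rewrite gtnNdvd //.
by have := prime_gt1 p_prime; case: (p) p_odd => [|[|[|]]].
Qed.

Lemma Fp4_neq0 : (4 : 'F_p) != 0.
Proof. by have := mulf_neq0 Fp2_neq0 Fp2_neq0; rewrite -natrM. Qed.

Lemma Fp3_neq0 : p != 3%N -> (3 : 'F_p) != 0.
Proof.
by move=> p_neq3; apply: Fp_natr_neq0; rewrite dvdn_prime2 // eq_sym.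
Qed.

Lemma Fp3_units (s : 'F_p) : p = 3%N -> s != 0 -> s = 1 \/ s = -1.
Proof.
move=> p3 s0; have := Fp_fermat_unit s0; have -> : p.-1 = 2%N by rewrite p3.
move=> /eqP.
rewrite -subr_eq0 (_ : s ^+ 2 - 1 = (s - 1) * (s + 1)); last by ring.
by rewrite mulf_eq0 subr_eq0 addr_eq0 => /orP[] /eqP; [left | right].
Qed.

Section ModularSymbols.
Variables (H : lmodType P) (act : 'F_p -> H -> H) (sym : 'F_p -> 'F_p -> H).
Hypothesis act_linear : forall a : 'F_p, a != 0 -> forall (c : P) (x y : H),
  act a (c *: x + y) = c *: act a x + act a y.
Hypothesis actM : forall a b : 'F_p, a != 0 -> b != 0 -> forall x,
  act (a * b) x = act a (act b x).
Hypothesis sym_act : forall a u v : 'F_p, a != 0 -> u != 0 -> v != 0 ->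
  act a (sym u v) = sym (a * u) (a * v).

Lemma in_C_closed : prop_submod_closed (in_C sym).
Proof.
split.
  exists 0%N, (fun=> 0), (fun=> 0%N), (fun=> 0%N), (fun=> 0), (fun=> 0).
  by split; [case | rewrite big_ord0].
move=> c ? ? [n1 [k1 [cs1 [ds1 [us1 [vs1 [ok1 ->]]]]]]].
move=> [n2 [k2 [cs2 [ds2 [us2 [vs2 [ok2 ->]]]]]]].
pose cat T (f1 : 'I_n1 -> T) (f2 : 'I_n2 -> T) (i : 'I_(n1 + n2)) :=
  match split i with inl j => f1 j | inr j => f2 j end.
exists (n1 + n2)%N, (cat _ (fun i => c * k1 i) k2), (cat _ cs1 cs2),
  (cat _ ds1 ds2), (cat _ us1 us2), (cat _ vs1 vs2); split.
  by move=> i; rewrite /cat; case: (split i).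
rewrite big_split_ord scaler_sumr; congr (_ + _); apply: eq_bigr => j _.
  by rewrite /cat (unsplitK (inl j : 'I_n1 + 'I_n2)) scalerA.
by rewrite /cat (unsplitK (inr j : 'I_n1 + 'I_n2)).
Qed.

Local Notation e := (e_om2 act).

Lemma e_om2_is_linear : linear e.
Proof.
move=> c x y; rewrite /e_om2 [in RHS]scalerA mulrC -scalerA -scalerDr.
congr (_ *: _); rewrite scaler_sumr -big_split; apply: eq_bigr => a a0.
by rewrite act_linear // scalerDr !scalerA mulrC.
Qed.

HB.instance Definition _ :=
  GRing.isLinear.Build P H H *:%R e e_om2_is_linear.

Lemma e_om2D x y : e (x + y) = e x + e y. Proof. exact: linearD. Qed.

Lemma e_om2B x y : e (x - y) = e x - e y. Proof. exact: linearB. Qed.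

Lemma e_om2Z c x : e (c *: x) = c *: e x. Proof. exact: linearZ. Qed.

Lemma e_om2_act (b : 'F_p) x : b != 0 -> e (act b x) = teich b ^+ 2 *: e x.
Proof.
move=> b0; rewrite /e_om2 [in RHS]scalerA mulrC -scalerA; congr (_ *: _).
have b'0 : b^-1 != 0 by rewrite invr_eq0.
rewrite scaler_sumr (reindex_inj (mulIf b'0)) /=.
apply: eq_big => [a|a a0]; first by rewrite mulf_eq0 (negbTE b'0) orbF.
have a'0 : a^-1 != 0 by rewrite invr_eq0; move: a0; rewrite mulf_eq0 negb_or => /andP[].
rewrite -actM // divfK // scalerA /omega_m2 invfM invrK teichM // exprMn.
by rewrite mulrC.
Qed.

Lemma e_om2_sym u v :
  u != 0 -> v != 0 -> e (sym u v) = teich u ^+ 2 *: e (sym 1 (v / u)).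
Proof.
move=> u0 v0; rewrite -e_om2_act // sym_act ?oner_neq0 ?mulf_neq0 ?invr_eq0 //.
by rewrite mulr1 mulrC divfK.
Qed.

Definition in_eCp (z : H) := exists c y, in_C sym c /\ z = e c + p%:R *: e y.

Lemma in_eCp_closed : prop_submod_closed in_eCp.
Proof.
have C_closed := in_C_closed.
split; first by exists 0, 0; rewrite !linear0 addr0; split => //; apply: prop_submod0.
move=> k _ _ [c1 [y1 [Cc1 ->]]] [c2 [y2 [Cc2 ->]]].
exists (k *: c1 + c2), (k *: y1 + y2); split.
  by apply: C_closed.2.
rewrite !e_om2D !e_om2Z; move: (e c1) (e c2) (e y1) (e y2) => a b c d.
by rewrite !scalerDr !scalerA (mulrC k) addrACA.
Qed.

Lemma in_eCp_e c : in_C sym c -> in_eCp (e c).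
Proof. by move=> Cc; exists c, 0; rewrite linear0 scaler0 addr0. Qed.

Lemma in_eCp_red_eq (s s' : P) y : red s = red s' -> in_eCp ((s - s') *: e y).
Proof.
move=> ss'; have [z ->] : exists z : P, s - s' = p%:R * z.
  by apply: red_eq0_dvdp; rewrite // rmorphB /= ss' subrr.
exists 0, (z *: y); rewrite linear0 add0r e_om2Z scalerA; split => //.
exact: prop_submod0 in_C_closed.
Qed.

Definition comb (g : 'F_p -> P) : H := \sum_(t | t != 0) g t *: e (sym 1 t).

(* [rel_modp G]: the congruence \sum_t G t * f_t = 0 modulo M holds for some
   lift of G to Z_p (and then for every lift, by [in_eCp_red_eq]). *)
Definition rel_modp (G : 'F_p -> 'F_p) :=
  exists g, in_eCp (comb g) /\ forall t, t != 0 -> red (g t) = G t.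

Lemma rel_modp_pts (l : seq (P * 'F_p)) :
  all (fun x => x.2 != 0) l -> in_eCp (\sum_(x <- l) x.1 *: e (sym 1 x.2)) ->
  rel_modp (fun t => \sum_(x <- l) red x.1 * (t == x.2)%:R).
Proof.
move=> l_neq0 in_l; exists (fun t => \sum_(x <- l) x.1 * (t == x.2)%:R); split.
  congr in_eCp: in_l; rewrite /comb (eq_bigr _ (fun t _ => scaler_suml _ _ _ _)).
  rewrite exchange_big /=; apply: eq_big_seq => x xl.
  rewrite (bigD1 x.2) ?(allP l_neq0) //= eqxx mulr1 big1 ?addr0 // => t /andP[_ /negbTE->].
  by rewrite mulr0 scale0r.
by move=> t _; rewrite rmorph_sum; apply: eq_bigr => x _; rewrite rmorphM rmorph_nat.
Qed.

Lemma rel_modp_eq G G' : (forall t, t != 0 -> G t = G' t) -> rel_modp G -> rel_modp G'.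
Proof. by move=> GG' [g [in_g gG]]; exists g; split => // t t0; rewrite gG ?GG'. Qed.

Lemma rel_modpD G G' : rel_modp G -> rel_modp G' -> rel_modp (fun t => G t + G' t).
Proof.
move=> [g [in_g gG]] [g' [in_g' gG']]; exists (fun t => g t + g' t); split.
  rewrite /comb (eq_bigr _ (fun t _ => scalerDl _ _ _)) big_split /=.
  exact: prop_submodD in_eCp_closed _ _ in_g in_g'.
by move=> t t0; rewrite rmorphD /= gG ?gG'.
Qed.

Lemma rel_modpZ c G : rel_modp G -> rel_modp (fun t => c * G t).
Proof.
move=> [g [in_g gG]]; exists (fun t => (val c)%:R * g t); split.
  rewrite /comb (eq_bigr _ (fun t _ => esym (scalerA _ _ _))) -scaler_sumr.
  exact: prop_submodZ in_eCp_closed _ _ in_g.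
by move=> t t0; rewrite rmorphM /= red_natr_Fp gG.
Qed.

Lemma rel_modpZ_unit c G : c != 0 -> rel_modp (fun t => c * G t) -> rel_modp G.
Proof.
move=> c0 /(rel_modpZ c^-1); apply: rel_modp_eq => t _.
by rewrite mulrA mulVf // mul1r.
Qed.

Lemma in_eCp_rel_modp_indic s :
  s != 0 -> rel_modp (fun t => (t == s)%:R) -> in_eCp (e (sym 1 s)).
Proof.
move=> s0 [g [in_g gs]].
have -> : e (sym 1 s) = comb g + comb (fun t => (t == s)%:R - g t).
  rewrite -big_split /= (bigD1 s) //= big1 => [|t /andP[_ /negbTE ts]].
    by rewrite eqxx addr0 -scalerDl addrC subrK scale1r.
  by rewrite ts sub0r -scalerDl addrN scale0r.
apply: prop_submodD in_eCp_closed _ _ in_g _.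
apply: prop_submod_sum in_eCp_closed _ _ _ _ _ => t t0.
by apply: in_eCp_red_eq; rewrite rmorph_nat gs.
Qed.

Lemma in_C_cd_sym C D u v : (1 < C)%N -> (1 < D)%N ->
  coprime C (6 * p) -> coprime D (6 * p) -> u != 0 -> v != 0 ->
  in_C sym (cd_sym sym C D u v).
Proof.
move=> C1 D1 Cco Dco u0 v0.
exists 1%N, (fun=> 1), (fun=> C), (fun=> D), (fun=> u), (fun=> v); split.
  by move=> i; split => //; rewrite u0 v0.
by rewrite big_ord1 scale1r.
Qed.

Lemma rel_modp_cd c d t : c != 0 -> d != 0 -> t != 0 ->
  rel_modp (fun x => d ^+ 2 * (x == t)%:R - (x == d * t)%:R
                     - d ^+ 2 * (x == t / c)%:R + (x == d * t / c)%:R).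
Proof.
move=> c0 d0 t0.
have [C [C1 Cco Cc]] := Fp_unit_natr_lift c0.
have [D [D1 Dco Dd]] := Fp_unit_natr_lift d0.
have dt0 : d * t != 0 by rewrite mulf_neq0.
have q0 x : x != 0 -> x / c != 0 by move=> x0; rewrite mulf_neq0 ?invr_eq0.
pose l := [:: ((C ^ 2 * D ^ 2)%:R, t); (- (C ^ 2)%:R, d * t);
              (- ((D ^ 2)%:R * teich c ^+ 2), t / c); (teich c ^+ 2, d * t / c)].
have := @rel_modp_pts l; rewrite /= t0 dt0 !q0 // => /(_ isT).
have -> : \sum_(x <- l) x.1 *: e (sym 1 x.2) = e (cd_sym sym C D 1 t).
  rewrite /cd_sym Cc Dd mulr1 e_om2D !e_om2B !e_om2Z (e_om2_sym c0 t0) (e_om2_sym c0 dt0).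
  rewrite /l !big_cons big_nil addr0 /=.
  move: (e (sym 1 _)) (e (sym 1 _)) (e (sym 1 _)) (e (sym 1 _)) => a b c' d'.
  by rewrite !scaleNr scalerA !addrA.
move=> /(_ (in_eCp_e (in_C_cd_sym C1 D1 Cco Dco (oner_neq0 _) t0))) rel_l.
apply: (rel_modpZ_unit (expf_neq0 2 c0)); apply: rel_modp_eq rel_l => x _.
rewrite /l !big_cons big_nil /= !(rmorphM, rmorphN, rmorph_nat) /= red_teich // Cc Dd.
by ring.
Qed.

Hypothesis sym_antisym : forall u v : 'F_p, u != 0 -> v != 0 ->
  sym u v = - sym (- v) u.

Lemma rel_modp_swap t : t != 0 ->
  rel_modp (fun x => (x == t)%:R + t ^+ 2 * (x == - t^-1)%:R).
Proof.
move=> t0; have Nt0 : - t != 0 by rewrite oppr_eq0.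
have := @rel_modp_pts [:: (1, t); (teich (- t) ^+ 2, 1 / - t)].
rewrite /= t0 div1r invr_eq0 Nt0 => /(_ isT).
rewrite !big_cons big_nil /= -div1r -e_om2_sym ?oner_neq0 // scale1r addr0.
rewrite -e_om2D {1}(sym_antisym (oner_neq0 _) t0) addNr linear0.
move=> /(_ (prop_submod0 in_eCp_closed)); apply: rel_modp_eq => x _.
rewrite !big_cons big_nil /= rmorph1 rmorphXn /= red_teich // div1r invrN.
by rewrite mul1r addr0 sqrrN.
Qed.

Lemma rel_modp_indic1 : rel_modp (fun x => (x == 1)%:R).
Proof.
have N10 : (-1 : 'F_p) != 0 by rewrite oppr_eq0 oner_eq0.
have := rel_modpD (rel_modpZ 2 (rel_modp_swap (oner_neq0 _)))
                  (rel_modp_cd N10 N10 (oner_neq0 _)).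
move=> /(rel_modpZ 4^-1); apply: rel_modp_eq => x _.
rewrite invr1 !mulr1 div1r invrN1 mulrNN mulr1.
by field; apply: Fp4_neq0.
Qed.

Lemma rel_modp_indicN1 : rel_modp (fun x => (x == -1)%:R).
Proof.
have := rel_modpD (rel_modp_swap (oner_neq0 _)) (rel_modpZ (-1) rel_modp_indic1).
by apply: rel_modp_eq => x _; rewrite invr1 expr1n; ring.
Qed.

Lemma rel_modp_mul d t : d != 0 -> t != 0 ->
  rel_modp (fun x => d ^+ 2 * (x == t)%:R - (x == d * t)%:R + (x == d)%:R).
Proof.
move=> d0 t0; have := rel_modpD (rel_modp_cd t0 d0 t0) (rel_modpZ (d ^+ 2) rel_modp_indic1).
by apply: rel_modp_eq => x _; rewrite divff // mulfK //; ring.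
Qed.

Lemma rel_modp_sq d t : d != 0 -> t != 0 ->
  rel_modp (fun x => (d ^+ 2 - 1) * (x == t)%:R - (t ^+ 2 - 1) * (x == d)%:R).
Proof.
move=> d0 t0; have := rel_modpD (rel_modp_mul d0 t0) (rel_modpZ (-1) (rel_modp_mul t0 d0)).
by apply: rel_modp_eq => x _; rewrite (mulrC t d); ring.
Qed.

Variable T2 : H -> H.
Hypothesis T2_linear : forall (c : P) x y, T2 (c *: x + y) = c *: T2 x + T2 y.
Hypothesis T2_act : forall a : 'F_p, a != 0 -> forall x, T2 (act a x) = act a (T2 x).
Hypothesis T2_sym : forall u v : 'F_p, u != 0 -> v != 0 -> u + v != 0 ->
  act 2 (T2 (sym u v)) =
    sym (2 * u) v + sym (2 * u) (u + v) + sym (u + v) (2 * v) + sym u (2 * v).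
Hypothesis T2_eigen : forall y : H, (exists x : H, y = e x) ->
  T2 y = (1 + 2%:R * omega_m2 (2%:R : 'F_p)) *: y.

HB.instance Definition _ := GRing.isLinear.Build P H H *:%R T2 T2_linear.

Lemma T2_e_om2 x : T2 (e x) = e (T2 x).
Proof.
rewrite /e_om2 linearZ linear_sum /=; congr (_ *: _); apply: eq_bigr => a a0.
by rewrite linearZ /= T2_act.
Qed.

Lemma e_om2_T2_eigen_sym12 : p != 3%N ->
  (teich 2 ^+ 2 * (1 + 2%:R * omega_m2 (2%:R : 'F_p))) *: e (sym 1 2) =
    teich 2 ^+ 2 *: e (sym 1 1) + teich 2 ^+ 2 *: e (sym 1 (3 / 2))
    + teich 3 ^+ 2 *: e (sym 1 (4 / 3)) + e (sym 1 4).
Proof.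
move=> p_neq3; have two0 := Fp2_neq0.
have n21 : (2 * 1 : 'F_p) != 0 by rewrite mulr1.
have e3 : (1 + 2 : 'F_p) = 3 by ring.
have e4 : (2 * 2 : 'F_p) = 4 by ring.
have n12 : (1 + 2 : 'F_p) != 0 by rewrite e3 Fp3_neq0.
have n22 : (2 * 2 : 'F_p) != 0 by rewrite mulf_neq0.
rewrite -scalerA -T2_eigen; last by exists (sym 1 2).
rewrite T2_e_om2 -e_om2_act // T2_sym ?oner_neq0 // !e_om2D.
rewrite (e_om2_sym n21 two0) (e_om2_sym n21 n12) (e_om2_sym n12 n22).
by rewrite (e_om2_sym (oner_neq0 _) n22) mulr1 e3 e4 divff // divr1 teich1 expr1n scale1r.
Qed.

Lemma rel_modp_T2 : p != 3%N ->
  rel_modp (fun x => 6 * (x == 2)%:R - 4 * (x == 1)%:R - 4 * (x == 3 / 2)%:R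
                     - 9 * (x == 4 / 3)%:R - (x == 4)%:R).
Proof.
move=> p_neq3; have two0 := Fp2_neq0; have three0 := Fp3_neq0 p_neq3.
have q0 x y : x != 0 -> y != 0 -> (x / y : 'F_p) != 0.
  by move=> x0 y0; rewrite mulf_neq0 ?invr_eq0.
have := @rel_modp_pts
  [:: (teich 2 ^+ 2 * (1 + 2%:R * omega_m2 (2%:R : 'F_p)), 2); (- teich 2 ^+ 2, 1);
      (- teich 2 ^+ 2, 3 / 2); (- teich 3 ^+ 2, 4 / 3); (-1, 4)].
rewrite /= two0 Fp4_neq0 !q0 ?Fp4_neq0 // => /(_ isT).
rewrite !big_cons big_nil /= e_om2_T2_eigen_sym12 // addr0 scaleN1r !scaleNr.
rewrite -!opprD !addrA subrr => /(_ (prop_submod0 in_eCp_closed)).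
apply: rel_modp_eq => x _; rewrite !big_cons big_nil /= /omega_m2.
rewrite !(rmorphM, rmorphD, rmorphN, rmorph_nat, rmorph1) /= !red_teich ?invr_eq0 //.
by field.
Qed.

Lemma rel_modp_indic2 : p != 3%N -> rel_modp (fun x => (x == 2)%:R).
Proof.
move=> p_neq3; have two0 := Fp2_neq0; have three0 := Fp3_neq0 p_neq3.
have q0 x y : x != 0 -> y != 0 -> (x / y : 'F_p) != 0.
  by move=> x0 y0; rewrite mulf_neq0 ?invr_eq0.
have := rel_modpD (rel_modpZ 3 (rel_modp_T2 p_neq3)) (rel_modpZ 12 rel_modp_indic1).
move=> /rel_modpD /(_ (rel_modpZ 4 (rel_modp_sq two0 (q0 _ _ three0 two0)))).
move=> /rel_modpD /(_ (rel_modpZ 9 (rel_modp_sq two0 (q0 _ _ Fp4_neq0 three0)))).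
move=> /rel_modpD /(_ (rel_modp_sq two0 Fp4_neq0)) rel.
have n9 : (-9 : 'F_p) != 0 by rewrite oppr_eq0 (_ : 9 = 3 * 3) ?mulf_neq0 //; ring.
apply: (rel_modpZ_unit n9); apply: rel_modp_eq rel => x _.
by field; rewrite two0 three0.
Qed.

Lemma rel_modp_indic s : s != 0 -> rel_modp (fun x => (x == s)%:R).
Proof.
move=> s0; have [p3 | p_neq3] := eqVneq p 3%N.
  by case: (Fp3_units p3 s0) => ->; [apply: rel_modp_indic1 | apply: rel_modp_indicN1].
have := rel_modpD (rel_modp_sq Fp2_neq0 s0)
                  (rel_modpZ (s ^+ 2 - 1) (rel_modp_indic2 p_neq3)).
move=> rel; apply: (rel_modpZ_unit (Fp3_neq0 p_neq3)); apply: rel_modp_eq rel => x _.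
by ring.
Qed.

Hypothesis sym_span : forall x : H, exists c : {ffun 'F_p * 'F_p -> P},
  x = \sum_(uv : 'F_p * 'F_p | (uv.1 != 0) && (uv.2 != 0)) c uv *: sym uv.1 uv.2.

Lemma in_C_p2_sym u v : u != 0 -> v != 0 -> in_C sym (p%:R ^+ 2 *: sym u v).
Proof.
move=> u0 v0; have p_ndvd1 : ~~ (p %| 1)%N by rewrite dvdn1 neq_ltn prime_gt1 ?orbT.
have [j [j0 pj co6]] := coprime6_shift p_ndvd1.
set C := (1 + p * j)%N.
have C1 : (1 < C)%N by have := prime_gt1 p_prime; rewrite /C; nia.
have Cco : coprime C (6 * p).
  by rewrite coprimeMr co6 coprime_sym prime_coprime // dvdn_addl ?dvdn_mulr.
have CF : (C%:R : 'F_p) = 1 by rewrite natrD natrM pchar_Fp_0 // mul0r addr0.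
pose m := (j * (2 + p * j))%N.
have [w wm] : exists w : P, w * (m%:R ^+ 2) = 1.
  apply: red_neq0_invertible; rewrite rmorphXn rmorph_nat expf_neq0 // /m natrM natrD natrM.
  by rewrite pchar_Fp_0 // mul0r addr0 mulf_neq0 ?Fp2_neq0 ?Fp_natr_neq0.
(* C = 1 (mod p) gives _{C,C}[u:v] = (C^2 - 1)^2 [u:v] = (p m)^2 [u:v]. *)
have -> : p%:R ^+ 2 *: sym u v = w *: cd_sym sym C C u v.
  rewrite /cd_sym CF !mul1r -!scalerBl -[X in _ + X]scale1r -scalerDl scalerA.
  have -> : (C ^ 2)%N = (1 + p * m)%N by rewrite /C /m; nia.
  congr (_ *: _); rewrite natrM natrD natrM.
  by transitivity (p%:R ^+ 2 * (w * m%:R ^+ 2)); [rewrite wm mulr1 | ring].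
by apply: prop_submodZ in_C_closed _ _ (in_C_cd_sym C1 C1 Cco Cco u0 v0).
Qed.

Lemma in_C_p2 x : in_C sym (p%:R ^+ 2 *: x).
Proof.
have [c ->] := sym_span x; rewrite scaler_sumr.
apply: prop_submod_sum in_C_closed _ _ _ _ _ => uv /andP[u0 v0].
by rewrite scalerA mulrC -scalerA; apply: prop_submodZ in_C_closed _ _ (in_C_p2_sym u0 v0).
Qed.

Lemma in_eCp_e_om2 x : in_eCp (e x).
Proof.
have [c ->] := sym_span x; rewrite linear_sum /=.
apply: prop_submod_sum in_eCp_closed _ _ _ _ _ => uv /andP[u0 v0].
rewrite e_om2Z (e_om2_sym u0 v0) scalerA; apply: prop_submodZ in_eCp_closed _ _ _.
have vu0 : uv.2 / uv.1 != 0 by rewrite mulf_neq0 ?invr_eq0.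
exact: in_eCp_rel_modp_indic vu0 (rel_modp_indic vu0).
Qed.

Lemma e_om2_in_C x : exists c, in_C sym c /\ e x = e c.
Proof. exact: linear_image_lift_mod_sq in_C_closed in_C_p2 in_eCp_e_om2 x. Qed.

End ModularSymbols.

End PrimeLevel.

Theorem proposition2p25 (p : nat) (p_prime : prime p) (p_odd : odd p)
  (H : lmodType (padic p)) (act : 'F_p -> H -> H) (sym : 'F_p -> 'F_p -> H)
  (T2 : H -> H) :
  cusp_modsym act sym ->
  T2_operator act sym T2 ->
  (forall y : H, (exists x : H, y = e_om2 act x) ->
     T2 y = (1 + 2%:R * omega_m2 (2%:R : 'F_p)) *: y) ->
  forall y : H,
    (exists x : H, y = e_om2 act x) <->
    (exists x : H, in_C sym x /\ y = e_om2 act x).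
Proof.
move=> [act_linear [_ [actM [_ [sym_span [sym_rel [_ sym_act]]]]]]].
move=> [T2_linear T2_act T2_sym] T2_eigen y.
have sym_antisym u v : u != 0 -> v != 0 -> sym u v = - sym (- v) u.
  by move=> u0 v0; case: (sym_rel u v u0 v0).
split=> [[x ->] | [x [_ ->]]]; last by exists x.
exact: (e_om2_in_C p_prime p_odd act_linear actM sym_act sym_antisym
  T2_linear T2_act T2_sym T2_eigen sym_span x).
Qed.
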